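(* Let $\Phi:\mathbb{R}_{++}^{n\times m}\to\mathbb{R}$ be a convex function which is positively 1-homogeneous ($\Phi(tA)=t\Phi(A)$ for all $t>0$). Then for every $p\in\mathcal{P}_{n-1}$, $q\in\mathcal{P}_{m-1}$, \[ \inf_{P\in\Pi(p,q)}\Phi(P)=\sup\Big\{\langle p,\alpha\rangle+\langle q,\beta\rangle\ :\ \alpha\in\mathbb{R}^n,\ \beta\in\mathbb{R}^m,\ \Phi^*(\alpha\oplus\beta)=0\Big\}. \]
   Context: $\mathbb{R}_{++}^{n\times m}$ denotes the set of real $n\times m$ matrices with all entries strictly positive. $\mathcal{P}_{n-1}=\{p\in\mathbb{R}^n:\sum_i p_i=1,\ p_i>0\}$, similarly $\mathcal{P}_{m-1}$. $\Pi(p,q)=\{P\in\mathbb{R}_{++}^{n\times m}:\sum_j P_{ij}=p_i\ \forall i,\ \sum_i P_{ij}=q_j\ \forall j\}$. The Legendre transform is $\Phi^*(u)=\sup_{A\in\mathbb{R}_{++}^{n\times m}}\{\langle A,u\rangle-\Phi(A)\}\in\mathbb{R}\cup\{+\infty\}$ with $\langle A,u\rangle=\sum_{i,j}A_{ij}u^{ij}$, and $(\alpha\oplus\beta)^{ij}=\alpha^i+\beta^j$. *)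

From HB Require Import structures.
From mathcomp Require Import all_boot all_order all_algebra.
From mathcomp Require Import all_classical all_reals ereal.
Set Implicit Arguments. Unset Strict Implicit. Unset Printing Implicit Defensive.
Import Order.TTheory GRing.Theory Num.Theory.
Local Open Scope ring_scope.
Local Open Scope classical_set_scope.

Definition posmx (R : realType) (n m : nat) (A : 'M[R]_(n, m)) : Prop :=
  forall i j, 0 < A i j.

Definition simplex_pos (R : realType) (n : nat) (p : 'I_n -> R) : Prop :=
  (forall i, 0 < p i) /\ \sum_(i < n) p i = 1.

Definition couplings (R : realType) (n m : nat) (p : 'I_n -> R) (q : 'I_m -> R)
  : set 'M[R]_(n, m) :=
  [set P | posmx P /\ (forall i, \sum_(j < m) P i j = p i)
                   /\ (forall j, \sum_(i < n) P i j = q j)].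

Definition frob (R : realType) (n m : nat) (A u : 'M[R]_(n, m)) : R :=
  \sum_(i < n) \sum_(j < m) A i j * u i j.

Definition oplus_mx (R : realType) (n m : nat) (a : 'I_n -> R) (b : 'I_m -> R)
  : 'M[R]_(n, m) := \matrix_(i < n, j < m) (a i + b j).

Definition legendre (R : realType) (n m : nat) (Phi : 'M[R]_(n, m) -> R)
  (u : 'M[R]_(n, m)) : \bar R :=
  ereal_sup [set ((frob A u - Phi A)%:E) | A in posmx (R:=R) (n:=n) (m:=m)].

Definition convex_on_pos (R : realType) (n m : nat) (Phi : 'M[R]_(n, m) -> R) : Prop :=
  forall A B t, posmx A -> posmx B -> 0 <= t -> t <= 1 ->
    Phi (t *: A + (1 - t) *: B) <= t * Phi A + (1 - t) * Phi B.

Definition pos_homogeneous (R : realType) (n m : nat) (Phi : 'M[R]_(n, m) -> R) : Prop :=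
  forall A t, posmx A -> 0 < t -> Phi (t *: A) = t * Phi A.

From HB Require Import structures.
From mathcomp Require Import all_boot all_order all_algebra.
From mathcomp Require Import all_classical all_reals ereal.
From mathcomp Require Import ring lra.
Set Implicit Arguments. Unset Strict Implicit. Unset Printing Implicit Defensive.
Import Order.TTheory GRing.Theory Num.Theory.
Local Open Scope ring_scope.
Local Open Scope classical_set_scope.

(* Since [Phi] is 1-homogeneous, its Legendre transform vanishes at [u] exactly
   when [<A, u> <= Phi A] for every positive [A].  Weak duality is then the
   identity [<P, a (+) c> = <p, a> + <q, c>] for every coupling [P].  Strong
   duality needs, for a lower bound [r] of [Phi] on the couplings, a linear
   minorant [<., u>] of [Phi] on the positive cone with [u = a (+) c] and
   [<p q^T, u> = r]: a finite-dimensional Hahn-Banach argument.  We first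
   develop, in an arbitrary module, the one-dimensional extension of a
   sublinear function [s] on a convex cone with internal point [b], namely
   [x |-> inf_t s (x + t e) - t c], which is affine along [e]; iterating it
   along the "rectangle" moves spanning the coupling fiber (slope 0, keeping
   the bound [r]), then along [p q^T] (slope [r]) and finally along all matrix
   units produces the linear minorant. *)

Section SublinearCone.
Variables (R : realType) (V : lmodType R).

Record sublinear_cone (b : V) (D : V -> Prop) (phi : V -> R) : Prop := {
  cone_base : D b;
  coneD : forall x y, D x -> D y -> D (x + y);
  coneZ : forall x l, 0 < l -> D x -> D (l *: x);
  cone_subadd : forall x y, D x -> D y -> phi (x + y) <= phi x + phi y;
  cone_homog : forall x l, 0 < l -> D x -> phi (l *: x) = l * phi x;
  cone_internal : forall x, exists2 l, 0 < l & D (l *: b + x) }.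

Definition linear_along (D : V -> Prop) (s : V -> R) (e : V) (c : R) : Prop :=
  forall x t, D x -> D (x + t *: e) /\ s (x + t *: e) = s x + t * c.

Definition refines (D : V -> Prop) (s : V -> R) (D' : V -> Prop) (s' : V -> R)
    : Prop :=
  (forall x, D x -> D' x /\ s' x <= s x) /\
  (forall f c, linear_along D s f c -> linear_along D' s' f c).

Lemma refines_refl D s : refines D s D s.
Proof. by split => // x Dx; split. Qed.

Lemma refines_trans D s D1 s1 D2 s2 :
  refines D s D1 s1 -> refines D1 s1 D2 s2 -> refines D s D2 s2.
Proof.
move=> [le1 lin1] [le2 lin2]; split => [x Dx|f c /lin1 /lin2 //].
have [D1x s1x] := le1 _ Dx; have [D2x s2x] := le2 _ D1x.
by split => //; apply: le_trans s1x.
Qed.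

(* On the line [b + R e], [s] minus the linear function of slope [c] is
   bounded below: this makes the extension with slope [c] finite. *)
Definition admissible_slope (b : V) (D : V -> Prop) (s : V -> R) (e : V) (c : R)
    : Prop :=
  exists M, forall u, D (b + u *: e) -> M <= s (b + u *: e) - u * c.

Definition ext_dom (D : V -> Prop) (e : V) (x : V) : Prop :=
  exists t, D (x + t *: e).

Definition ext_vals (D : V -> Prop) (s : V -> R) (e : V) (c : R) (x : V) : set R :=
  [set y | exists2 t, D (x + t *: e) & y = s (x + t *: e) - t * c].

Definition ext_fun (D : V -> Prop) (s : V -> R) (e : V) (c : R) (x : V) : R :=
  inf (ext_vals D s e c x).

Lemma ext_dom_ind (D : V -> Prop) (e : V) (Q : V -> Prop) :
  (forall x t, Q (x + t *: e) -> Q x) -> (forall x, D x -> Q x) ->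
  forall x, ext_dom D e x -> Q x.
Proof. by move=> HQ HD x [t Dt]; apply: (HQ _ t); apply: HD. Qed.

Lemma scale_dir (l t : R) (x e : V) :
  l != 0 -> l *: (x + (t / l) *: e) = l *: x + t *: e.
Proof. by move=> l0; rewrite scalerDr scalerA mulrC divfK. Qed.

Lemma scale_slope (l t c a : R) :
  l != 0 -> l * (a - t / l * c) = l * a - t * c.
Proof. by move=> l0; field. Qed.

Section OneStep.
Variables (b : V) (D : V -> Prop) (s : V -> R).
Hypothesis hcone : sublinear_cone b D s.

Lemma cone_unscale_dir l x e t :
  0 < l -> D (l *: x + t *: e) -> D (x + (t / l) *: e).
Proof.
move=> l0 Dx; have il0 : 0 < l^-1 by rewrite invr_gt0.
have := coneZ hcone il0 Dx.
by rewrite -scale_dir ?gt_eqF // scalerA mulVf ?gt_eqF // scale1r.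
Qed.

Lemma cone_homog_dir l x e t :
  0 < l -> D (l *: x + t *: e) -> s (l *: x + t *: e) = l * s (x + (t / l) *: e).
Proof.
move=> l0 Dx; rewrite -scale_dir ?gt_eqF //.
exact (cone_homog hcone l0 (cone_unscale_dir l0 Dx)).
Qed.

Lemma ext_dom_self e x : D x -> ext_dom D e x.
Proof. by move=> Dx; exists 0; rewrite scale0r addr0. Qed.

Lemma ext_domD e x y : ext_dom D e x -> ext_dom D e y -> ext_dom D e (x + y).
Proof.
move=> [t Dt] [u Du]; exists (t + u).
by rewrite scalerDl addrACA; exact (coneD hcone Dt Du).
Qed.

Lemma ext_domZ e l x : 0 < l -> ext_dom D e x -> ext_dom D e (l *: x).
Proof.
move=> l0 [t Dt]; exists (l * t).
by rewrite -scalerA -scalerDr; exact (coneZ hcone l0 Dt).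
Qed.

Lemma ext_dom_shift e x tau : ext_dom D e x -> ext_dom D e (x + tau *: e).
Proof. by move=> [t Dt]; exists (t - tau); rewrite -addrA -scalerDl subrKC. Qed.

(* Convexity of [s] along the line [b + R e]: chord slopes from [b] increase. *)
Lemma chord_slope_mono e u w : u < 0 -> 0 < w ->
  D (b + u *: e) -> D (b + w *: e) ->
  (s (b + u *: e) - s b) / u <= (s (b + w *: e) - s b) / w.
Proof.
move=> u0 w0 Du Dw; have wu : 0 < w - u by lra.
set th := w / (w - u); set th' := - u / (w - u).
have th0 : 0 < th by rewrite divr_gt0.
have th'0 : 0 < th' by rewrite divr_gt0 // oppr_gt0.
have comb : th *: (b + u *: e) + th' *: (b + w *: e) = b.
  rewrite !scalerDr !scalerA addrACA -!scalerDl.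
  have -> : th + th' = 1 by rewrite /th /th'; field; rewrite gt_eqF.
  have -> : th * u + th' * w = 0 by rewrite /th /th'; field; rewrite gt_eqF.
  by rewrite scale1r scale0r addr0.
have := cone_subadd hcone (coneZ hcone th0 Du) (coneZ hcone th'0 Dw).
rewrite comb (cone_homog hcone th0 Du) (cone_homog hcone th'0 Dw).
set A := s (b + u *: e); set B := s (b + w *: e); set C := s b => sub.
have cross : (w - u) * C <= w * A - u * B.
  have -> : w * A - u * B = (w - u) * (th * A + th' * B).
    by rewrite /th /th'; field; rewrite gt_eqF.
  by rewrite ler_pM2l.
rewrite -subr_le0.
have -> : (A - C) / u - (B - C) / w = (w * A - u * B - (w - u) * C) / (u * w).
  by field; rewrite gt_eqF // lt_eqF.
by rewrite mulr_ge0_le0 ?subr_ge0 // invr_le0 nmulr_rle0 // ltW.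
Qed.

(* Every direction admits a slope (the infimum of the forward chord slopes),
   which is the key to the one-dimensional Hahn-Banach step. *)
Lemma admissible_slope_exists e : exists c, admissible_slope b D s e c.
Proof.
have [l1 l10 D1] := cone_internal hcone e.
have [l2 l20 D2] := cone_internal hcone (- e).
have Dfw : D (b + (1 / l1) *: e) by apply: cone_unscale_dir; rewrite ?scale1r.
have Dbw : D (b + (-1 / l2) *: e) by apply: cone_unscale_dir; rewrite ?scaleN1r.
have fw0 : 0 < 1 / l1 by rewrite divr_gt0.
have bw0 : -1 / l2 < 0 by rewrite mulN1r oppr_lt0 invr_gt0.
pose slope u := (s (b + u *: e) - s b) / u.
pose fwd := [set y | exists2 u, 0 < u /\ D (b + u *: e) & y = slope u].
have fwd_lb : has_lbound fwd.
  by exists (slope (-1 / l2)) => _ [w [w0 Dw] ->]; apply: chord_slope_mono.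
have fwd_ne : nonempty fwd by exists (slope (1 / l1)), (1 / l1).
exists (inf fwd), (s b) => u Du.
case: (ltgtP u 0) => [u0|u0|->].
- have : slope u <= inf fwd.
    by apply: lb_le_inf => // _ [w [w0 Dw] ->]; apply: chord_slope_mono.
  by rewrite /slope ler_ndivrMr //; lra.
- have : inf fwd <= slope u by apply: (ge_inf fwd_lb); exists u.
  by rewrite /slope ler_pdivlMr //; lra.
- by rewrite scale0r addr0 mul0r subr0.
Qed.

Section Slope.
Variables (e : V) (c : R).
Hypothesis hc : admissible_slope b D s e c.

Local Notation S := (ext_fun D s e c).

(* Admissibility at [b] propagates to every point, using that [b] is internal. *)
Lemma ext_vals_lbound x : has_lbound (ext_vals D s e c x).
Proof.
have [M HM] := hc; have [l l0 Dl] := cone_internal hcone (- x).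
exists (l * M - s (l *: b - x)) => _ [t Dt ->].
have shift : x + t *: e + (l *: b - x) = l *: b + t *: e.
  by rewrite addrC addrA subrK addrC.
have Dlt : D (l *: b + t *: e) by rewrite -shift; exact (coneD hcone Dt Dl).
have sub := cone_subadd hcone Dt Dl; rewrite shift cone_homog_dir // in sub.
have := HM _ (cone_unscale_dir l0 Dlt).
rewrite -(ler_pM2l l0) scale_slope ?gt_eqF //; lra.
Qed.

Lemma ext_fun_le x t : D (x + t *: e) -> S x <= s (x + t *: e) - t * c.
Proof. by move=> Dt; apply: (ge_inf (ext_vals_lbound x)); exists t. Qed.

Lemma ext_fun_ge x r : ext_dom D e x ->
  (forall t, D (x + t *: e) -> r <= s (x + t *: e) - t * c) -> r <= S x.
Proof.
move=> [t0 Dt0] H; apply: lb_le_inf; first by exists (s (x + t0 *: e) - t0 * c), t0.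
by move=> _ [t Dt ->]; apply: H.
Qed.

Lemma ext_fun_le_self x : D x -> S x <= s x.
Proof.
by move=> Dx; have := ext_fun_le (x:=x) (t:=0); rewrite scale0r addr0 mul0r subr0; apply.
Qed.

Lemma ext_subadd x y : ext_dom D e x -> ext_dom D e y -> S (x + y) <= S x + S y.
Proof.
move=> Dx Dy.
have split_pt t u : D (x + t *: e) -> D (y + u *: e) ->
    S (x + y) <= (s (x + t *: e) - t * c) + (s (y + u *: e) - u * c).
  move=> Dt Du; have Dtu := coneD hcone Dt Du; rewrite addrACA -scalerDl in Dtu.
  have := ext_fun_le Dtu; have := cone_subadd hcone Dt Du.
  rewrite addrACA -scalerDl; lra.
suff : S (x + y) - S x <= S y by lra.
apply: ext_fun_ge => // u Du; suff : S (x + y) - (s (y + u *: e) - u * c) <= S x by lra.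
by apply: ext_fun_ge => // t Dt; have := split_pt t u Dt Du; lra.
Qed.

Lemma ext_homog x l : 0 < l -> ext_dom D e x -> S (l *: x) = l * S x.
Proof.
move=> l0 Dx; apply/eqP; rewrite eq_le; apply/andP; split.
- rewrite -ler_pdivrMl //; apply: ext_fun_ge => // t Dt; rewrite ler_pdivrMl //.
  have Dlt : D (l *: x + (l * t) *: e).
    by rewrite -scalerA -scalerDr; exact (coneZ hcone l0 Dt).
  apply: le_trans (ext_fun_le Dlt) _.
  by rewrite -scalerA -scalerDr (cone_homog hcone l0 Dt) mulrBr mulrA.
- apply: ext_fun_ge; first exact: ext_domZ.
  move=> t Dt; rewrite cone_homog_dir //.
  have := ext_fun_le (cone_unscale_dir l0 Dt).
  by rewrite -(ler_pM2l l0) scale_slope ?gt_eqF.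
Qed.

Lemma ext_cone : sublinear_cone b (ext_dom D e) S.
Proof.
split.
- exact: ext_dom_self (cone_base hcone).
- exact: ext_domD.
- by move=> x l l0; apply: ext_domZ.
- exact: ext_subadd.
- by move=> x l l0; apply: ext_homog.
- move=> x; have [l l0 Dl] := cone_internal hcone x.
  by exists l => //; apply: ext_dom_self.
Qed.

(* Half of the affinity along [e]; the other half is this bound at [-tau]. *)
Lemma ext_shift_le x tau : ext_dom D e x -> S (x + tau *: e) <= S x + tau * c.
Proof.
move=> Dx; suff : S (x + tau *: e) - tau * c <= S x by lra.
apply: ext_fun_ge => // t Dt.
have Dt' : D (x + tau *: e + (t - tau) *: e) by rewrite -addrA -scalerDl subrKC.
have := ext_fun_le Dt'; rewrite -addrA -scalerDl subrKC; lra.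
Qed.

Lemma ext_linear : linear_along (ext_dom D e) S e c.
Proof.
move=> x tau Dx; have Dxt := ext_dom_shift tau Dx; split => //.
apply/eqP; rewrite eq_le ext_shift_le //=.
have := ext_shift_le (- tau) Dxt; rewrite -addrA -scalerDl addrN scale0r addr0.
lra.
Qed.

Lemma ext_keeps_linear f cf :
  linear_along D s f cf -> linear_along (ext_dom D e) S f cf.
Proof.
move=> L.
have shift_le x tau : ext_dom D e x -> S (x + tau *: f) <= S x + tau * cf.
  move=> Dx; suff : S (x + tau *: f) - tau * cf <= S x by lra.
  apply: ext_fun_ge => // t Dt; have [Dtf stf] := L _ tau Dt.
  rewrite addrAC in Dtf stf; have := ext_fun_le Dtf; rewrite stf; lra.
move=> x tau Dx.
have Dxt : ext_dom D e (x + tau *: f).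
  by case: Dx => t Dt; exists t; rewrite addrAC; case: (L _ tau Dt).
split => //; apply/eqP; rewrite eq_le shift_le //=.
have := shift_le _ (- tau) Dxt; rewrite -addrA -scalerDl addrN scale0r addr0.
lra.
Qed.

Lemma ext_refines : refines D s (ext_dom D e) S.
Proof.
split; last exact: ext_keeps_linear.
by move=> x Dx; split; [apply: ext_dom_self | apply: ext_fun_le_self].
Qed.

End Slope.

Lemma fiber_admissible e (P : V -> Prop) r : P b ->
  (forall x t, P x -> P (x + t *: e)) -> (forall x, D x -> P x -> r <= s x) ->
  admissible_slope b D s e 0.
Proof.
by move=> Pb HP Hr; exists r => u Du; rewrite mulr0 subr0; apply: Hr => //; apply: HP.
Qed.

Lemma ext_fiber_bound e (P : V -> Prop) r :
  (forall x t, P x -> P (x + t *: e)) -> (forall x, D x -> P x -> r <= s x) ->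
  forall x, ext_dom D e x -> P x -> r <= ext_fun D s e 0 x.
Proof.
move=> HP Hr x Dx Px; apply: ext_fun_ge => // t Dt.
by rewrite mulr0 subr0; apply: Hr => //; apply: HP.
Qed.

End OneStep.

Lemma extend_along_all b D s (es : seq V) : sublinear_cone b D s ->
  exists D' s' (slope : V -> R), [/\ sublinear_cone b D' s', refines D s D' s'
    & forall e, e \in es -> linear_along D' s' e (slope e)].
Proof.
elim: es D s => [|e es IH] D s hD.
  by exists D, s, (fun=> 0); split => //; apply: refines_refl.
have [c hc] := admissible_slope_exists hD e.
have [D' [s' [slope [hD' ref' lin']]]] := IH _ _ (ext_cone hD hc).
exists D', s', (fun f => if f == e then c else slope f); split => //.
  exact: refines_trans (ext_refines hD hc) ref'.
move=> f; rewrite inE; case: eqP => [-> _|_ /= fes]; last exact: lin'.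
exact: ref'.2 _ _ (ext_linear hD hc).
Qed.

Lemma extend_along_fiber b D s (es : seq V) (P : V -> Prop) r :
  sublinear_cone b D s -> P b ->
  (forall e, e \in es -> forall x t, P x -> P (x + t *: e)) ->
  (forall x, D x -> P x -> r <= s x) ->
  exists D' s', [/\ sublinear_cone b D' s', refines D s D' s',
    (forall e, e \in es -> linear_along D' s' e 0),
    (forall x, D' x -> P x -> r <= s' x) &
    (forall Q : V -> Prop,
       (forall e, e \in es -> forall x t, Q (x + t *: e) -> Q x) ->
       (forall x, D x -> Q x) -> forall x, D' x -> Q x)].
Proof.
elim: es D s => [|e es IH] D s hD Pb HP Hr.
  by exists D, s; split => //; apply: refines_refl.
have HPe := HP _ (mem_head e es).
have hc := fiber_admissible Pb HPe Hr.
have HPes e' : e' \in es -> forall x t, P x -> P (x + t *: e').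
  by move=> e'es; apply: HP; rewrite inE e'es orbT.
have [D' [s' [hD' ref' lin' bound' ind']]] :=
  IH _ _ (ext_cone hD hc) Pb HPes (ext_fiber_bound HPe Hr).
exists D', s'; split => //.
- exact: refines_trans (ext_refines hD hc) ref'.
- move=> f; rewrite inE; case: eqP => [-> _|_ /= fes]; last exact: lin'.
  exact: ref'.2 _ _ (ext_linear hD hc).
- move=> Q HQ HD; apply: ind'.
    by move=> e' e'es; apply: HQ; rewrite inE e'es orbT.
  by apply: ext_dom_ind HD; apply: HQ; apply: mem_head.
Qed.

End SublinearCone.

Lemma sum_indicator (R : pzRingType) k (F : 'I_k -> R) i :
  \sum_l (l == i)%:R * F l = F i.
Proof.
rewrite (bigD1 i) //= eqxx mul1r big1 ?addr0 // => l /negbTE ->.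
by rewrite mul0r.
Qed.

Lemma sum_indicator_diff (R : pzRingType) k (F : 'I_k -> R) i i0 :
  \sum_l ((l == i)%:R - (l == i0)%:R) * F l = F i - F i0.
Proof.
under eq_bigr do rewrite mulrBl.
by rewrite sumrB !sum_indicator.
Qed.

Section Couplings.
Variables (R : realType) (n m : nat).
Implicit Types (x y A u : 'M[R]_(n, m)) (p : 'I_n -> R) (q : 'I_m -> R).

Lemma frobD x y u : frob (x + y) u = frob x u + frob y u.
Proof.
rewrite /frob -big_split; apply: eq_bigr => i _; rewrite -big_split.
by apply: eq_bigr => j _; rewrite mxE mulrDl.
Qed.

Lemma frobZ (d : R) x u : frob (d *: x) u = d * frob x u.
Proof.
rewrite /frob mulr_sumr; apply: eq_bigr => i _; rewrite mulr_sumr.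
by apply: eq_bigr => j _; rewrite mxE mulrA.
Qed.

Lemma frob_coupling p q P (a : 'I_n -> R) (c : 'I_m -> R) :
  couplings p q P -> frob P (oplus_mx a c) = \sum_i p i * a i + \sum_j q j * c j.
Proof.
move=> [_ [rowP colP]].
rewrite /frob (eq_bigr (fun i => \sum_j P i j * a i + \sum_j P i j * c j)); last first.
  by move=> i _; rewrite -big_split; apply: eq_bigr => j _; rewrite mxE mulrDr.
rewrite big_split /=; congr (_ + _).
  by apply: eq_bigr => i _; rewrite -mulr_suml rowP.
by rewrite exchange_big; apply: eq_bigr => j _; rewrite -mulr_suml colP.
Qed.

Definition prod_mx p q : 'M[R]_(n, m) := \matrix_(i, j) (p i * q j).

Lemma prod_mx_coupling p q :
  simplex_pos p -> simplex_pos q -> couplings p q (prod_mx p q).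
Proof.
move=> [p0 p1] [q0 q1]; split; first by move=> i j; rewrite mxE mulr_gt0.
split => [i|j]; rewrite /prod_mx.
- by under eq_bigr do rewrite mxE; rewrite -mulr_sumr q1 mulr1.
- by under eq_bigr do rewrite mxE; rewrite -mulr_suml p1 mul1r.
Qed.

Lemma le_sum_entry (F : 'I_n -> 'I_m -> R) i j :
  (forall k l, 0 <= F k l) -> F i j <= \sum_k \sum_l F k l.
Proof.
move=> F0; rewrite (bigD1 i) //= (bigD1 j) //= -addrA lerDl.
by rewrite addr_ge0 ?sumr_ge0 // => k _; rewrite sumr_ge0.
Qed.

Lemma prod_mx_internal p q : simplex_pos p -> simplex_pos q ->
  forall x, exists2 l, 0 < l & posmx (l *: prod_mx p q + x).
Proof.
move=> [p0 _] [q0 _] x.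
have pq0 i j : 0 < p i * q j by rewrite mulr_gt0.
pose l := 1 + \sum_i \sum_j `|x i j| / (p i * q j).
have ratio0 i j : 0 <= `|x i j| / (p i * q j) by rewrite divr_ge0 // ltW.
have l0 : 0 < l by rewrite ltr_pwDl // sumr_ge0 // => i _; rewrite sumr_ge0.
exists l => // i j; rewrite !mxE.
have : (1 + `|x i j| / (p i * q j)) * (p i * q j) <= l * (p i * q j).
  by rewrite ler_pM2r // lerD2l le_sum_entry.
rewrite mulrDl mul1r divfK ?gt_eqF //.
have := pq0 i j; have := ler_norm (- x i j); rewrite normrN; lra.
Qed.

Lemma convex_homog_subadd (Phi : 'M[R]_(n, m) -> R) :
  convex_on_pos Phi -> pos_homogeneous Phi ->
  forall x y, posmx x -> posmx y -> Phi (x + y) <= Phi x + Phi y.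
Proof.
move=> hconv hhom x y Dx Dy.
have half : (1 - 2^-1 : R) = 2^-1 by field.
have := hconv x y 2^-1 Dx Dy; rewrite half invr_ge0 ler0n invf_le1 ?ler1n //.
have mid0 : posmx (2^-1 *: x + 2^-1 *: y).
  by move=> i j; rewrite !mxE addr_gt0 // mulr_gt0 // invr_gt0.
have -> : x + y = 2 *: (2^-1 *: x + 2^-1 *: y).
  by rewrite scalerDr !scalerA mulfV ?pnatr_eq0 // !scale1r.
rewrite hhom //; move=> /(_ isT isT); lra.
Qed.

Lemma posmx_cone (Phi : 'M[R]_(n, m) -> R) p q :
  convex_on_pos Phi -> pos_homogeneous Phi -> simplex_pos p -> simplex_pos q ->
  sublinear_cone (prod_mx p q) (@posmx R n m) Phi.
Proof.
move=> hconv hhom hp hq; split.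
- exact: (prod_mx_coupling hp hq).1.
- by move=> x y Dx Dy i j; rewrite mxE addr_gt0.
- by move=> x l l0 Dx i j; rewrite mxE mulr_gt0.
- exact: convex_homog_subadd.
- by move=> x l l0 Dx; apply: hhom.
- exact: prod_mx_internal.
Qed.

(* The elementary move [e_ij - e_ij0 - e_i0j + e_i0j0], with vanishing row
   and column sums; these moves span the directions of the coupling fiber. *)
Definition rect_mx (i0 i : 'I_n) (j0 j : 'I_m) : 'M[R]_(n, m) :=
  \matrix_(k, l) (((k == i)%:R - (k == i0)%:R) * ((l == j)%:R - (l == j0)%:R)).


Lemma rect_mx_row i0 i j0 j k : \sum_l rect_mx i0 i j0 j k l = 0.
Proof.
under eq_bigr do rewrite mxE -[X in _ * X]mulr1.
by rewrite -mulr_sumr sum_indicator_diff subrr mulr0.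
Qed.

Lemma rect_mx_col i0 i j0 j l : \sum_k rect_mx i0 i j0 j k l = 0.
Proof.
under eq_bigr do rewrite mxE -[X in X * _]mulr1.
by rewrite -mulr_suml sum_indicator_diff subrr mul0r.
Qed.

Lemma frob_rect_mx i0 i j0 j u :
  frob (rect_mx i0 i j0 j) u = (u i j - u i j0) - (u i0 j - u i0 j0).
Proof.
rewrite /frob -(sum_indicator_diff (fun k => u k j - u k j0)).
apply: eq_bigr => k _; rewrite -(sum_indicator_diff (u k)) mulr_sumr.
apply: eq_bigr => l _.
by rewrite mxE mulrA.
Qed.

End Couplings.
Arguments rect_mx {R n m}.

Lemma cone_linear_frob (R : realType) n m (b : 'M[R]_(n, m)) D s (u : 'M[R]_(n, m)) :
  sublinear_cone b D s -> (forall i j, linear_along D s (delta_mx i j) (u i j)) ->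
  forall y, s y = frob y u.
Proof.
move=> hD lin.
pose T y a := forall x, D x -> D (x + y) /\ s (x + y) = s x + a.
have T0 : T 0 0 by move=> x Dx; rewrite !addr0.
have TD y1 a1 y2 a2 : T y1 a1 -> T y2 a2 -> T (y1 + y2) (a1 + a2).
  move=> T1 T2 x Dx; have [D1 s1] := T1 _ Dx; have [D2 s2] := T2 _ D1.
  by rewrite addrA s2 s1 addrA.
have Tall y : T y (frob y u).
  rewrite {1}(matrix_sum_delta y) /frob.
  apply: (big_ind2 T T0 TD) => i _; apply: (big_ind2 T T0 TD) => j _.
  by move=> x Dx; apply: lin.
have [D0 s0] := Tall (- b) _ (cone_base hD); rewrite addrN in D0 s0.
have s00 : s 0 = 0.
  have two0 : (0 : R) < 2 by [].
  have := cone_homog hD two0 D0; rewrite scaler0; lra.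
by move=> y; have [_] := Tall y _ D0; rewrite add0r s00 add0r.
Qed.

Definition has_marginals (R : realType) n m (p : 'I_n -> R) (q : 'I_m -> R)
    (x : 'M[R]_(n, m)) : Prop :=
  (forall i, \sum_j x i j = p i) /\ (forall j, \sum_i x i j = q j).

(* Total mass; it stays positive on the domains built from the positive cone. *)
Definition mass (R : realType) n m (x : 'M[R]_(n, m)) : R := \sum_i \sum_j x i j.

Lemma massZ (R : realType) n m (d : R) (x : 'M[R]_(n, m)) : mass (d *: x) = d * mass x.
Proof.
rewrite /mass mulr_sumr; apply: eq_bigr => i _; rewrite mulr_sumr.
by apply: eq_bigr => j _; rewrite mxE.
Qed.

Section DualCertificate.
Variables (R : realType) (n m : nat) (Phi : 'M[R]_(n, m) -> R).
Variables (p : 'I_n -> R) (q : 'I_m -> R) (r : R) (i0 : 'I_n) (j0 : 'I_m).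
Hypotheses (hconv : convex_on_pos Phi) (hhom : pos_homogeneous Phi).
Hypotheses (hp : simplex_pos p) (hq : simplex_pos q).
Hypothesis hr : forall P, couplings p q P -> r <= Phi P.
Implicit Types (e x : 'M[R]_(n, m)) (t : R).

Local Notation b := (prod_mx p q).
Local Notation moves := [seq rect_mx i0 ij.1 j0 ij.2 | ij : 'I_n * 'I_m].

Lemma moves_entry e x t : e \in moves ->
  exists ij : 'I_n * 'I_m,
    forall k l, (x + t *: e) k l = x k l + t * rect_mx i0 ij.1 j0 ij.2 k l.
Proof. by move=> /mapP [ij _ ->]; exists ij => k l; rewrite !mxE. Qed.

Lemma moves_marginals e : e \in moves ->
  forall x t, has_marginals p q x -> has_marginals p q (x + t *: e).
Proof.
move=> he x t [rowx colx]; have [ij E] := moves_entry x t he; split => [k|l].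
- by under eq_bigr do rewrite E; rewrite big_split /= -mulr_sumr rect_mx_row mulr0 addr0.
- by under eq_bigr do rewrite E; rewrite big_split /= -mulr_sumr rect_mx_col mulr0 addr0.
Qed.

Lemma moves_mass e x t : e \in moves -> mass (x + t *: e) = mass x.
Proof.
move=> /(moves_entry x t) [ij E]; rewrite /mass.
apply: eq_bigr => k _; under eq_bigr do rewrite E.
by rewrite big_split /= -mulr_sumr rect_mx_row mulr0 addr0.
Qed.

Lemma fiber_minorant : exists D s,
  [/\ sublinear_cone b D s, refines (@posmx R n m) Phi D s,
      forall e, e \in moves -> linear_along D s e 0 & linear_along D s b r].
Proof.
have hcone := posmx_cone hconv hhom hp hq.
have [_ margb] := prod_mx_coupling hp hq.
have [D1 [s1 [hD1 ref1 lin1 bound1 ind1]]] := extend_along_fiber hcone margb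
  moves_marginals (fun x Dx Px => hr (conj Dx Px)).
have mass1 : forall x, D1 x -> 0 < mass x.
  apply: ind1 => [e he x t|x Dx]; first by rewrite moves_mass.
  by apply: lt_le_trans (Dx i0 j0) _; apply: le_sum_entry => k l; apply: ltW.
have mass_b : mass b = 1.
  rewrite /mass (eq_bigr (fun i => p i)) ?hp.2 // => i _.
  by under eq_bigr do rewrite mxE; rewrite -mulr_sumr hq.2 mulr1.
have hc : admissible_slope b D1 s1 b r.
  exists r => u; rewrite -[X in X + _]scale1r -scalerDl => Du.
  have u1 : 0 < 1 + u by have := mass1 _ Du; rewrite massZ mass_b mulr1.
  rewrite (cone_homog hD1 u1 (cone_base hD1)).
  have := bound1 _ (cone_base hD1) margb; nra.
exists (ext_dom D1 b), (ext_fun D1 s1 b r); split.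
- exact (ext_cone hD1 hc).
- exact: refines_trans ref1 (ext_refines hD1 hc).
- by move=> e he; exact (ext_keeps_linear hD1 hc (lin1 e he)).
- exact (ext_linear hD1 hc).
Qed.

(* Extending further along all matrix units makes the minorant linear: it is
   the pairing with a matrix [u] that vanishes on the moves and equals [r] at
   the product coupling. *)
Lemma affine_minorant : exists u : 'M[R]_(n, m),
  [/\ forall A, posmx A -> frob A u <= Phi A,
      forall i j, frob (rect_mx i0 i j0 j) u = 0 & frob b u = r].
Proof.
have [D2 [s2 [hD2 ref2 lin2 linb]]] := fiber_minorant.
have [D3 [s3 [slope [hD3 ref3 lin3]]]] :=
  extend_along_all [seq delta_mx ij.1 ij.2 | ij : 'I_n * 'I_m] hD2.
pose u := \matrix_(i, j) slope (delta_mx i j : 'M[R]_(n, m)).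
have s3E : forall y, s3 y = frob y u.
  apply: (cone_linear_frob hD3) => i j; rewrite mxE; apply: lin3.
  by apply/mapP; exists (i, j); rewrite ?mem_enum.
have slopeE e c : linear_along D2 s2 e c -> frob e u = c.
  move=> /ref3.2 /(_ b 1 (cone_base hD3)) [_].
  by rewrite !s3E frobD scale1r mul1r => /addrI.
exists u; split.
- by move=> A DA; rewrite -s3E; have [_] := (refines_trans ref2 ref3).1 A DA.
- by move=> i j; apply: slopeE; apply: lin2; apply/mapP; exists (i, j); rewrite ?mem_enum.
- exact: slopeE linb.
Qed.

End DualCertificate.

Lemma simplex_pos_dim (R : realType) n (p : 'I_n -> R) : simplex_pos p -> (0 < n)%N.
Proof.
case: n p => [|n] p [_ p1] //; move: p1; rewrite big_ord0 => /eqP.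
by rewrite eq_sym oner_eq0.
Qed.

Lemma dual_certificate (R : realType) n m (Phi : 'M[R]_(n, m) -> R) p q r :
  convex_on_pos Phi -> pos_homogeneous Phi -> simplex_pos p -> simplex_pos q ->
  (forall P, couplings p q P -> r <= Phi P) ->
  exists a c, (forall A, posmx A -> frob A (oplus_mx a c) <= Phi A) /\
    \sum_i p i * a i + \sum_j q j * c j = r.
Proof.
move=> hconv hhom hp hq hr.
pose i0 := Ordinal (simplex_pos_dim hp); pose j0 := Ordinal (simplex_pos_dim hq).
have [u [le_u rect_u b_u]] := affine_minorant i0 j0 hconv hhom hp hq hr.
pose a i := u i j0; pose c j := u i0 j - u i0 j0.
have u_split : oplus_mx a c = u.
  apply/matrixP => i j; rewrite mxE /a /c.
  by have := rect_u i j; rewrite frob_rect_mx; lra.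
exists a, c; rewrite -(frob_coupling a c (prod_mx_coupling hp hq)) u_split.
by split.
Qed.

Lemma legendre_le (R : realType) n m (Phi : 'M[R]_(n, m) -> R) u A :
  legendre Phi u = 0%E -> posmx A -> frob A u <= Phi A.
Proof.
move=> hu DA; rewrite -subr_le0 -lee_fin.
have : ((frob A u - Phi A)%:E <= legendre Phi u)%E by apply: ereal_sup_ubound; exists A.
by rewrite hu.
Qed.

Lemma legendre_eq0 (R : realType) n m (Phi : 'M[R]_(n, m) -> R) u (b : 'M[R]_(n, m)) :
  pos_homogeneous Phi -> posmx b ->
  (forall A, posmx A -> frob A u <= Phi A) -> legendre Phi u = 0%E.
Proof.
move=> hhom Db hu; apply/eqP; rewrite eq_le; apply/andP; split.
  by apply: ge_ereal_sup => _ [A DA <-]; rewrite lee_fin subr_le0; apply: hu.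
apply/lee_subgt0Pr => e e0.
set a := frob b u - Phi b.
have a0 : a <= 0 by rewrite /a subr_le0; apply: hu.
pose d := e / (1 - a).
have d0 : 0 < d by rewrite /d divr_gt0 //; lra.
apply: le_ereal_sup_tmp; exists ((frob (d *: b) u - Phi (d *: b))%:E).
  by exists (d *: b) => // i j; rewrite mxE mulr_gt0.
rewrite frobZ hhom // -mulrBr -/a sub0e lee_fin.
have -> : d * a = d - e by rewrite /d; field; lra.
lra.
Qed.

Definition primal_value (R : realType) n m (Phi : 'M[R]_(n, m) -> R) p q : \bar R :=
  ereal_inf [set (Phi P)%:E | P in couplings p q].

Definition dual_value (R : realType) n m (Phi : 'M[R]_(n, m) -> R)
    (p : 'I_n -> R) (q : 'I_m -> R) : \bar R :=
  ereal_sup [set ((\sum_(i < n) p i * ab.1 i + \sum_(j < m) q j * ab.2 j)%:E)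
            | ab in [set ab : ('I_n -> R) * ('I_m -> R) |
                     legendre Phi (oplus_mx ab.1 ab.2) = 0%E]].

Lemma weak_duality (R : realType) n m (Phi : 'M[R]_(n, m) -> R) p q :
  (dual_value Phi p q <= primal_value Phi p q)%E.
Proof.
apply: ge_ereal_sup => _ [[a c] /= hl <-]; apply: le_ereal_inf_tmp => _ [P hP <-].
by rewrite lee_fin -(frob_coupling a c hP); apply: legendre_le hl hP.1.
Qed.

(* Strong duality: the primal value is finite (at most [Phi (p q^T)]), and a
   finite lower bound is attained by a dual certificate. *)
Lemma strong_duality (R : realType) n m (Phi : 'M[R]_(n, m) -> R) p q :
  convex_on_pos Phi -> pos_homogeneous Phi -> simplex_pos p -> simplex_pos q ->
  (primal_value Phi p q <= dual_value Phi p q)%E.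
Proof.
move=> hconv hhom hp hq; have hb := prod_mx_coupling hp hq.
have : (primal_value Phi p q <= (Phi (prod_mx p q))%:E)%E.
  by apply: ereal_inf_lbound; exists (prod_mx p q).
case E : primal_value => [r| |] // _; last by rewrite leNye.
have hr P : couplings p q P -> r <= Phi P.
  by move=> hP; rewrite -lee_fin -E; apply: ereal_inf_lbound; exists P.
have [a [c [feas val]]] := dual_certificate hconv hhom hp hq hr.
apply: ereal_sup_ubound; exists (a, c) => /=; last by rewrite val.
exact: legendre_eq0 hhom hb.1 feas.
Qed.

Unset Implicit Arguments.

Theorem lemmaA2 (R : realType) (n m : nat) (Phi : 'M[R]_(n, m) -> R)
  (hconv : convex_on_pos Phi) (hhom : pos_homogeneous Phi)
  (p : 'I_n -> R) (q : 'I_m -> R)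
  (hp : simplex_pos p) (hq : simplex_pos q) :
  ereal_inf [set (Phi P)%:E | P in couplings p q] =
  ereal_sup [set ((\sum_(i < n) p i * ab.1 i + \sum_(j < m) q j * ab.2 j)%:E)
            | ab in [set ab : ('I_n -> R) * ('I_m -> R) |
                     legendre Phi (oplus_mx ab.1 ab.2) = 0%E]].
Proof.
apply: le_anti; apply/andP; split.
- exact: strong_duality hconv hhom hp hq.
- exact: weak_duality.
Qed.
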